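(* Let $\alpha\in[0,1)$, let $s\geq 1$, $t\geq 1$ and $p\geq 1$ be integers, and let $n_{1}\geq n_{2}\geq\cdots\geq n_{t}\geq p$ be positive integers with $n=\sum_{i=1}^{t}n_{i}+s$ and $n_{1}\leq n-s-p(t-1)$. Then $$\rho_{\alpha}\big(K_{s}\vee(K_{n_{1}}\cup K_{n_{2}}\cup\cdots\cup K_{n_{t}})\big)\leq\rho_{\alpha}\big(K_{s}\vee(K_{n-s-p(t-1)}\cup(t-1)K_{p})\big),$$ with equality if and only if $(n_1,n_2,\ldots,n_t)=(n-s-p(t-1),p,\ldots,p)$.
   Context: For a graph $G$, $A(G)$ is its adjacency matrix and $D(G)$ the diagonal matrix of vertex degrees. For $\alpha\in[0,1]$, $A_{\alpha}(G)=\alpha D(G)+(1-\alpha)A(G)$, and $\rho_{\alpha}(G)$ denotes the largest eigenvalue of $A_{\alpha}(G)$. $K_m$ is the complete graph on $m$ vertices, $(t-1)K_p$ is the disjoint union of $t-1$ copies of $K_p$, $\cup$ denotes disjoint union, and $G_1\vee G_2$ (join) is obtained from $G_1\cup G_2$ by adding all edges between $V(G_1)$ and $V(G_2)$. *)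

From mathcomp Require Import all_boot all_order all_algebra.
From mathcomp Require Import polyrcf.
From mathcomp Require Import reals.
Set Implicit Arguments. Unset Strict Implicit. Unset Printing Implicit Defensive.
Import Order.TTheory GRing.Theory Num.Theory.
Local Open Scope ring_scope.

Section Graphs.
Variable R : realType.

(* A simple graph on vertex set 'I_n is given by a relation [e];
   only its symmetric irreflexive part is used (loops ignored). *)
Definition adj_mx (n : nat) (e : rel 'I_n) : 'M[R]_n :=
  \matrix_(i, j) ((i != j) && e i j)%:R.

Definition deg_mx (n : nat) (e : rel 'I_n) : 'M[R]_n :=
  diag_mx (\row_i \sum_j adj_mx e i j).

Definition A_alpha (n : nat) (alpha : R) (e : rel 'I_n) : 'M[R]_n :=
  alpha *: deg_mx e + (1 - alpha) *: adj_mx e.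

(* Largest eigenvalue of a square real matrix: the largest real root of its
   characteristic polynomial (rootsR lists all real roots in increasing order). *)
Definition lambda_max (n : nat) (M : 'M[R]_n) : R :=
  last 0 (rootsR (char_poly M)).

Definition rho_alpha (n : nat) (alpha : R) (e : rel 'I_n) : R :=
  lambda_max (A_alpha alpha e).
End Graphs.

(* blk ns k = index of the block containing position k, when positions
   0 .. sumn ns - 1 are split into consecutive blocks of sizes ns. *)
Fixpoint blk (ns : seq nat) (k : nat) : nat :=
  match ns with
  | [::] => 0%N
  | m :: ns' => if (k < m)%N then 0%N else (blk ns' (k - m)%N).+1
  end.

(* K_s \/ (K_{n_1} u ... u K_{n_t}) with ns = [:: n_1; ...; n_t]:
   vertices 0..s-1 form K_s, the remaining vertices are split into
   consecutive cliques of sizes n_1, ..., n_t. *)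
Definition join_cliques (s : nat) (ns : seq nat) : rel 'I_(s + sumn ns) :=
  fun i j => (i != j) &&
    [|| (i < s)%N, (j < s)%N | blk ns (i - s) == blk ns (j - s)].
Arguments join_cliques : clear implicits.

(* Let v be an eigenvector of A_alpha(G) whose eigenvalue l exceeds every pole
   n_i - 1 + alpha s.  Summing the eigen-equations over K_s and over each clique
   K_{n_i} shows that, unless l = alpha n - 1, l is a zero of the secular function
     g(l) = l - (alpha (n - s) + s - 1) - (1 - alpha)^2 s sum_i n_i / (l - (n_i - 1 + alpha s)),
   and conversely each such zero is an eigenvalue.  Since g increases to the right of its
   poles, rho_alpha(G) is its zero there; for the extremal partition that zero exists by
   the intermediate value theorem.  The i-th summand of g is f(n_i), f(x) = x / (y - x) with
   y = l + 1 - alpha s; f is convex, so among partitions with n_i >= p of a fixed total the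
   sum is largest at (n - s - p (t - 1), p, ..., p), strictly unless at most one n_i
   exceeds p.  So the extremal secular function is <= g at rho_alpha(G), which moves its
   zero to the right. *)

From mathcomp Require Import all_boot all_order all_algebra.
From mathcomp Require Import polyrcf reals.
From mathcomp Require Import ring lra zify.
Import Order.TTheory GRing.Theory Num.Theory.
Local Open Scope ring_scope.
Set Implicit Arguments. Unset Strict Implicit. Unset Printing Implicit Defensive.

Section LambdaMax.
Variable R : realType.

Lemma path_le_last (x : R) (s : seq R) y :
  path <=%R x s -> y \in x :: s -> y <= last x s.
Proof.
elim: s x y => [|z s IH] x y /=; first by rewrite inE => _ /eqP ->.
move=> /andP[xz zs]; rewrite inE => /orP[/eqP ->|ys]; last exact: IH.
by apply: le_trans xz _; apply: IH zs _; rewrite inE eqxx.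
Qed.

Variables (n : nat) (M : 'M[R]_n).

Lemma lambda_max_ge x : root (char_poly M) x -> x <= lambda_max M.
Proof.
move=> rx; have nz : char_poly M != 0 by rewrite monic_neq0 ?char_poly_monic.
have xin : x \in rootsR (char_poly M).
  by apply: (root_roots_on (roots_on_rootsR nz)); rewrite ?in_itv.
have := sorted_roots (- cauchy_bound (char_poly M)) (cauchy_bound (char_poly M)) (char_poly M).
rewrite /lambda_max -/(rootsR _); move: xin; case: rootsR => [//|y s] xin srt.
by apply: path_le_last xin; apply: sub_path srt => u v /ltW.
Qed.

(* [lambda_max] returns the junk value 0 when there is no real eigenvalue. *)
Lemma lambda_max_0_or_root : lambda_max M = 0 \/ root (char_poly M) (lambda_max M).
Proof.
have := @root_roots _ (char_poly M) (- cauchy_bound (char_poly M)) (cauchy_bound (char_poly M)).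
rewrite /lambda_max -/(rootsR _); case: rootsR => [|y s] rts /=; first by left.
by right; apply: rts; rewrite mem_last.
Qed.

Lemma lambda_max_eq r : 0 <= r -> root (char_poly M) r ->
  (forall x, root (char_poly M) x -> x <= r) -> lambda_max M = r.
Proof.
move=> r0 rr rmax; apply/eqP; rewrite eq_le lambda_max_ge // andbT.
by case: lambda_max_0_or_root => [->|/rmax].
Qed.

End LambdaMax.

Lemma sumn_count_ge p (l : seq nat) : all (leq p) l ->
  (p * size l + count (ltn p) l <= sumn l)%N.
Proof.
elim: l => [|m l IH] /=; first by rewrite muln0.
by case/andP=> pm /IH; rewrite mulnS; case: ltnP => /=; lia.
Qed.

Lemma mem_sumn_ge p (l : seq nat) m : all (leq p) l -> m \in l ->
  (m + p * (size l).-1 <= sumn l)%N.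
Proof.
move=> /allP lp ml; rewrite (perm_sumn (perm_to_rem ml)) /= -(size_rem ml) leq_add2l.
have remp : all (leq p) (rem m l) by apply/allP => x /mem_rem /lp.
exact: leq_trans (leq_addr _ _) (sumn_count_ge remp).
Qed.

Section ExtremalPartition.
Variables (p m : nat) (l : seq nat).
Hypothesis ns_ge_p : all (leq p) (m :: l).
Local Notation N := (sumn (m :: l) - p * size l)%N.

Lemma leq_top_part : (p <= N)%N.
Proof. by move: ns_ge_p => /= /andP[pm /sumn_count_ge]; lia. Qed.

Lemma sumn_extremal : sumn (N :: nseq (size l) p) = sumn (m :: l).
Proof. by rewrite /= sumn_nseq; move: ns_ge_p => /= /andP[_ /sumn_count_ge]; lia. Qed.

Lemma mem_leq_top_part k : k \in m :: l -> (k <= N)%N.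
Proof. by move=> /(mem_sumn_ge ns_ge_p) /=; lia. Qed.

End ExtremalPartition.

Lemma sorted_count_gt_le1 p (m : nat) (l : seq nat) :
  sorted geq (m :: l) -> all (leq p) l -> (count (ltn p) (m :: l) <= 1)%N ->
  l = nseq (size l) p.
Proof.
move=> srt /allP lp cnt; apply/all_pred1P/allP => x xl /=.
have xm : (x <= m)%N.
  by apply: (allP (order_path_min (fun _ _ _ h1 h2 => leq_trans h2 h1) srt)).
rewrite eqn_leq lp // andbT leqNgt; apply/negP => px.
have : (0 < count (ltn p) l)%N by rewrite -has_count; apply/hasP; exists x.
by move: cnt => /=; rewrite (leq_trans px xm) /=; lia.
Qed.

Section PoleTerm.
Variable R : realFieldType.

Definition pole_term (y x : R) := x / (y - x).

(* Convexity of [pole_term y] on [x < y]. *)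
Lemma pole_term_spread (y u v w : R) : w <= u -> w <= v -> 0 <= w -> u + v - w < y ->
  pole_term y u + pole_term y v <= pole_term y (u + v - w) + pole_term y w /\
  (pole_term y u + pole_term y v = pole_term y (u + v - w) + pole_term y w ->
    u = w \/ v = w).
Proof.
move=> wu wv w0 uvy.
have gap : 0 < (y - u) * (y - v) * (y - w) * (y - (u + v - w)) by rewrite !mulr_gt0 //; lra.
have diffE : pole_term y (u + v - w) + pole_term y w - (pole_term y u + pole_term y v) =
    y * ((y - u) + (y - v)) * (u - w) * (v - w) /
    ((y - u) * (y - v) * (y - w) * (y - (u + v - w))).
  by rewrite /pole_term; field; rewrite !gt_eqF //; lra.
have num0 : 0 <= y * ((y - u) + (y - v)) * (u - w) * (v - w) by rewrite !mulr_ge0 //; lra.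
split; first by rewrite -subr_ge0 diffE divr_ge0 // ltW.
have y0 : y != 0 by apply/eqP; lra.
have gaps0 : y - u + (y - v) != 0 by apply/eqP; lra.
move=> eq; move: diffE; rewrite eq subrr => /esym/eqP.
rewrite mulf_eq0 invr_eq0 (gt_eqF gap) orbF !mulf_eq0 (negbTE y0) (negbTE gaps0) /=.
by rewrite !subr_eq0 => /orP[]/eqP; [left|right].
Qed.

Lemma sum_pole_term_le (y : R) p m (l : seq nat) : all (leq p) (m :: l) ->
  (m + sumn l - p * size l)%:R < y ->
  \sum_(k <- m :: l) pole_term y k%:R <=
    pole_term y (m + sumn l - p * size l)%:R + (size l)%:R * pole_term y p%:R /\
  (\sum_(k <- m :: l) pole_term y k%:R =
    pole_term y (m + sumn l - p * size l)%:R + (size l)%:R * pole_term y p%:R ->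
   (count (ltn p) (m :: l) <= 1)%N).
Proof.
elim: l m => [|x l IH] m.
  by rewrite big_seq1 /= !addn0 muln0 subn0 mul0r addr0; split=> //; case: ltnP.
rewrite [all _ _]/= => /and3P[pm px pl] my.
set rr := (x + sumn l - p * size l)%N.
have sumx := sumn_count_ge pl.
have prr : (p <= rr)%N by rewrite /rr; lia.
have rrE : (m + sumn (x :: l) - p * size (x :: l) = m + rr - p)%N by rewrite /rr /=; lia.
have castE : (m + rr - p)%:R = m%:R + rr%:R - p%:R :> R.
  by rewrite natrB ?natrD //; lia.
have rry : rr%:R < y by apply: le_lt_trans my; rewrite ler_nat /=; lia.
have [IH1 IH2] := IH x (introT andP (conj px pl)) rry; rewrite -/rr in IH1 IH2.
rewrite rrE in my *; have := @pole_term_spread y m%:R rr%:R p%:R.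
rewrite !ler_nat ler0n -castE => /(_ pm prr isT my) [P1 P2].
rewrite big_cons [size _]/= -addn1 natrD mulrDl mul1r.
split=> [|eq]; first lra.
have eq_spread : pole_term y m%:R + pole_term y rr%:R =
  pole_term y (m + rr - p)%:R + pole_term y p%:R by lra.
have eq_IH : \sum_(k <- x :: l) pole_term y k%:R =
  pole_term y rr%:R + (size l)%:R * pole_term y p%:R by lra.
case: (P2 eq_spread) => /eqP; rewrite eqr_nat => /eqP mp.
  by rewrite [count _ _]/= mp ltnn; exact: IH2 eq_IH.
by move: sumx mp; rewrite /rr /=; case: ltnP => /=; lia.
Qed.

End PoleTerm.

Lemma blk_lt (ns : seq nat) k : (k < sumn ns)%N -> (blk ns k < size ns)%N.
Proof.
elim: ns k => [|m ns IH] k //=; case: (ltnP k m) => // mk kmns.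
by rewrite ltnS; apply: IH; lia.
Qed.

Lemma card_blk (ns : seq nat) b :
  #|[pred k : 'I_(sumn ns) | blk ns k == b]| = nth 0%N ns b.
Proof.
rewrite -sum1_card; elim: ns b => [|m ns IH] b /=; first by rewrite big_ord0 nth_nil.
rewrite big_split_ord /=.
rewrite (eq_bigl (fun _ => 0%N == b)) => [|i]; last by rewrite inE /= ltn_ord.
rewrite (eq_bigl (fun k : 'I_(sumn ns) => (blk ns k).+1 == b)) => [|k]; last first.
  by rewrite inE /= ltnNge leq_addr addKn.
case: b => [|b] /=.
  rewrite [X in (_ + X)%N]big_pred0 // addn0 -[RHS]card_ord -sum1_card.
  by apply: eq_bigl.
by rewrite big_pred0 // -IH; apply: eq_bigl => k; rewrite inE.
Qed.

Section SumBlock.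
Variables (V : nmodType) (ns : seq nat).

Lemma sum_blk_const b (x : V) :
  \sum_(k < sumn ns | blk ns k == b) x = x *+ nth 0%N ns b.
Proof. by rewrite -card_blk -sumr_const. Qed.

Lemma sum_by_blk (F : 'I_(sumn ns) -> V) :
  \sum_k F k = \sum_(b < size ns) \sum_(k < sumn ns | blk ns k == b) F k.
Proof.
by rewrite (partition_big (fun k : 'I_(sumn ns) => Ordinal (blk_lt (ltn_ord k))) xpredT).
Qed.

End SumBlock.

Lemma mulmx_A_alpha (R : realType) n (a : R) (e : rel 'I_n) (v : 'rV[R]_n) j :
  (v *m A_alpha a e) 0 j =
  a * (\sum_k adj_mx R e j k) * v 0 j + (1 - a) * \sum_i v 0 i * adj_mx R e i j.
Proof.
rewrite !mxE (eq_bigr (fun i => v 0 i * (a * ((\sum_k adj_mx R e i k) *+ (i == j))) +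
   (1 - a) * (v 0 i * adj_mx R e i j))) => [|i _]; last first.
  by rewrite /A_alpha /deg_mx !mxE mulrDr; congr (_ + _); exact: mulrCA.
rewrite big_split /= -mulr_sumr; congr (_ + _).
rewrite (bigD1 j) //= eqxx mulr1n [X in _ + X]big1 => [|i /negbTE ->]; last first.
  by rewrite mulr0n !mulr0.
by rewrite addr0 mulrC.
Qed.

Lemma sum_mul_neq (R : ringType) (I : finType) (w : I -> R) (P : pred I) j : P j ->
  \sum_i w i * ((i != j) && P i)%:R = \sum_(i | P i) w i - w j.
Proof.
move=> Pj; rewrite (bigD1 j) //= eqxx mulr0 add0r.
rewrite [in RHS](bigD1 j) //= [w j + _]addrC addrK.
rewrite [in RHS]big_mkcond /= [in LHS]big_mkcond /=; apply: eq_bigr => i _.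
by case: (i != j); case: (P i) => /=; rewrite ?mulr1 ?mulr0.
Qed.

Section JoinCliques.
Variables (R : realType) (s : nat) (ns : seq nat).
Local Notation G := (join_cliques s ns).
Local Notation adj := (adj_mx R G).

Lemma adj_lshift_lshift (i i' : 'I_s) :
  adj (lshift _ i) (lshift _ i') = ((i != i') && true)%:R.
Proof.
rewrite /adj_mx mxE /join_cliques /= ltn_ord /= !andbT andbb.
by rewrite (inj_eq (@lshift_inj _ _)).
Qed.

Lemma lshift_neq_rshift (i : 'I_s) (k : 'I_(sumn ns)) : lshift _ i != rshift _ k.
Proof. by rewrite -val_eqE /= neq_ltn (leq_trans (ltn_ord i) (leq_addr _ _)). Qed.

Lemma adj_lshift_rshift (i : 'I_s) (k : 'I_(sumn ns)) : adj (lshift _ i) (rshift _ k) = 1.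
Proof. by rewrite /adj_mx mxE /join_cliques /= ltn_ord /= lshift_neq_rshift. Qed.

Lemma adj_rshift_lshift (i : 'I_s) (k : 'I_(sumn ns)) : adj (rshift _ k) (lshift _ i) = 1.
Proof.
by rewrite /adj_mx mxE /join_cliques /= ltn_ord /= orbT eq_sym lshift_neq_rshift.
Qed.

Lemma adj_rshift_rshift (k k' : 'I_(sumn ns)) :
  adj (rshift _ k) (rshift _ k') = ((k != k') && (blk ns k == blk ns k'))%:R.
Proof.
rewrite /adj_mx mxE /join_cliques /= !ltnNge !leq_addr /= !addKn andbA andbb.
by rewrite (inj_eq (@rshift_inj _ _)).
Qed.

Lemma adj_mx_sym i j : adj i j = adj j i.
Proof.
rewrite /adj_mx !mxE /join_cliques eq_sym; congr ((_ && (_ && _))%:R).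
by rewrite orbA [((i < s)%N || _)]orbC -orbA [blk _ (j - s) == _]eq_sym.
Qed.

Lemma sum_adj_lshift (w : 'I_(s + sumn ns) -> R) (j : 'I_s) :
  \sum_i w i * adj i (lshift _ j) =
  \sum_(i < s) w (lshift _ i) - w (lshift _ j) + \sum_(k < sumn ns) w (rshift _ k).
Proof.
rewrite big_split_ord /=; congr (_ + _).
  under eq_bigr do rewrite adj_lshift_lshift.
  by rewrite (@sum_mul_neq _ _ (fun i => w (lshift _ i)) predT).
by apply: eq_bigr => k _; rewrite adj_rshift_lshift mulr1.
Qed.

Lemma sum_adj_rshift (w : 'I_(s + sumn ns) -> R) (k' : 'I_(sumn ns)) :
  \sum_i w i * adj i (rshift _ k') =
  \sum_(i < s) w (lshift _ i) +
  (\sum_(k < sumn ns | blk ns k == blk ns k') w (rshift _ k) - w (rshift _ k')).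
Proof.
rewrite big_split_ord /=; congr (_ + _).
  by apply: eq_bigr => k _; rewrite adj_lshift_rshift mulr1.
under eq_bigr do rewrite adj_rshift_rshift.
by rewrite (@sum_mul_neq _ _ (fun k => w (rshift _ k)) (fun k => blk ns k == blk ns k')).
Qed.

Lemma deg_lshift (j : 'I_s) : \sum_k adj (lshift _ j) k = s%:R - 1 + (sumn ns)%:R.
Proof.
under eq_bigr do rewrite adj_mx_sym -[adj _ _]mul1r.
by rewrite (@sum_adj_lshift (fun _ => 1)) !sumr_const !card_ord.
Qed.

Lemma deg_rshift (k : 'I_(sumn ns)) :
  \sum_j adj (rshift _ k) j = s%:R + (nth 0%N ns (blk ns k))%:R - 1.
Proof.
under eq_bigr do rewrite adj_mx_sym -[adj _ _]mul1r.
by rewrite (@sum_adj_rshift (fun _ => 1)) sumr_const card_ord sum_blk_const addrA.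
Qed.

End JoinCliques.

Section Secular.
Variables (R : realType) (s : nat) (ns : seq nat) (a : R).
Local Notation G := (join_cliques s ns).
Local Notation A := (A_alpha a G).
Local Notation row := 'rV[R]_(s + sumn ns).

Definition pole (m : nat) : R := m%:R - 1 + a * s%:R.
Definition secular_base : R := a * (sumn ns)%:R + s%:R - 1.
Definition secular (l : R) : R :=
  l - secular_base - (1 - a) ^+ 2 * s%:R * \sum_(m <- ns) m%:R / (l - pole m).

Lemma ler_pole m n : (m <= n)%N -> pole m <= pole n.
Proof. by move=> mn; rewrite /pole !lerD2r ler_nat. Qed.

Lemma pole_ge0 m : 0 <= a -> (0 < m)%N -> 0 <= pole m.
Proof.
move=> a_ge0 m_gt0; have : (1 : R) <= m%:R by rewrite ler1n.
have : 0 <= a * s%:R by rewrite mulr_ge0.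
rewrite /pole; lra.
Qed.

Definition head_sum (v : row) := \sum_(i < s) v 0 (lshift _ i).
Definition tail_sum (v : row) := \sum_(k < sumn ns) v 0 (rshift s k).
Definition block_sum (v : row) b := \sum_(k < sumn ns | blk ns k == b) v 0 (rshift s k).

Lemma mulmx_A_lshift (v : row) j : (v *m A) 0 (lshift _ j) =
  a * (s%:R - 1 + (sumn ns)%:R) * v 0 (lshift _ j) +
  (1 - a) * (head_sum v - v 0 (lshift _ j) + tail_sum v).
Proof. by rewrite mulmx_A_alpha deg_lshift sum_adj_lshift. Qed.

Lemma mulmx_A_rshift (v : row) k : (v *m A) 0 (rshift _ k) =
  a * (s%:R + (nth 0%N ns (blk ns k))%:R - 1) * v 0 (rshift _ k) +
  (1 - a) * (head_sum v + (block_sum v (blk ns k) - v 0 (rshift _ k))).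
Proof. by rewrite mulmx_A_alpha deg_rshift sum_adj_rshift. Qed.

Lemma tail_sum_by_blk (v : row) : tail_sum v = \sum_(b < size ns) block_sum v b.
Proof. exact: sum_by_blk. Qed.

Section Eigenvector.
Variables (v : row) (l : R).
Hypothesis eig_v : v *m A = l *: v.

Lemma eigen_lshift (j : 'I_s) :
  (l - a * (s%:R - 1 + (sumn ns)%:R) + (1 - a)) * v 0 (lshift _ j) =
  (1 - a) * (head_sum v + tail_sum v).
Proof.
have := congr1 (fun w : row => w 0 (lshift _ j)) eig_v.
by rewrite mulmx_A_lshift mxE /=; lra.
Qed.

Lemma eigen_rshift (k : 'I_(sumn ns)) : ((l - pole (nth 0%N ns (blk ns k))) +
    (1 - a) * (nth 0%N ns (blk ns k))%:R) * v 0 (rshift _ k) =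
  (1 - a) * (head_sum v + block_sum v (blk ns k)).
Proof.
have := congr1 (fun w : row => w 0 (rshift _ k)) eig_v.
by rewrite mulmx_A_rshift mxE /pole /=; lra.
Qed.

Lemma eigen_head_sum :
  (l - secular_base) * head_sum v = (1 - a) * s%:R * tail_sum v.
Proof.
have : \sum_(j < s) (l - a * (s%:R - 1 + (sumn ns)%:R) + (1 - a)) * v 0 (lshift _ j) =
    \sum_(j < s) (1 - a) * (head_sum v + tail_sum v).
  by apply: eq_bigr => j _; exact: eigen_lshift.
rewrite -mulr_sumr -/(head_sum v) sumr_const card_ord -mulr_natl /secular_base; lra.
Qed.

Lemma eigen_block_sum b : (l - pole (nth 0%N ns b)) * block_sum v b =
  (1 - a) * (nth 0%N ns b)%:R * head_sum v.
Proof.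
have : \sum_(k < sumn ns | blk ns k == b) ((l - pole (nth 0%N ns b)) +
    (1 - a) * (nth 0%N ns b)%:R) * v 0 (rshift _ k) =
  \sum_(k < sumn ns | blk ns k == b) (1 - a) * (head_sum v + block_sum v b).
  by apply: eq_bigr => k /eqP <-; exact: eigen_rshift.
rewrite -mulr_sumr -/(block_sum v b) sum_blk_const -mulr_natl; lra.
Qed.

Hypothesis a_lt1 : a < 1.
Hypothesis l_above : {in ns, forall m, pole m < l}.

Lemma pole_blk_lt (b : 'I_(size ns)) : pole (nth 0%N ns b) < l.
Proof. by rewrite l_above ?mem_nth. Qed.

Lemma eigen_head_sum0 : v != 0 -> head_sum v = 0 -> l = a * (s + sumn ns)%:R - 1.
Proof.
move=> v_nz head0.
have block0 (b : 'I_(size ns)) : block_sum v b = 0.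
  have := eigen_block_sum b; rewrite head0 mulr0 => /eqP; rewrite mulf_eq0.
  by case/predU1P=> [|/eqP//]; have := pole_blk_lt b; lra.
have tail0 : tail_sum v = 0 by rewrite tail_sum_by_blk big1.
have vR k : v 0 (rshift _ k) = 0.
  have bk := pole_blk_lt (Ordinal (blk_lt (ltn_ord k))).
  have := block0 (Ordinal (blk_lt (ltn_ord k))); move: bk => /= bk block0k.
  have := eigen_rshift k; rewrite head0 block0k addr0 mulr0 => /eqP; rewrite mulf_eq0.
  case/predU1P=> [|/eqP//].
  have : 0 <= (1 - a) * (nth 0%N ns (blk ns k))%:R by rewrite mulr_ge0 // subr_ge0 ltW.
  lra.
apply: contraNeq v_nz => l_neq; apply/eqP/rowP => j; rewrite mxE.
case: (splitP j) => [i|k] jE; last by rewrite (_ : j = rshift _ k) ?vR //; apply: val_inj.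
rewrite (_ : j = lshift _ i); last exact: val_inj.
have := eigen_lshift i; rewrite head0 tail0 addr0 mulr0 => /eqP; rewrite mulf_eq0.
case/predU1P=> [|/eqP//]; move/eqP: l_neq; rewrite natrD; lra.
Qed.

Lemma eigen_secular : v != 0 -> secular l = 0 \/ l = a * (s + sumn ns)%:R - 1.
Proof.
move=> v_nz; have [head0|head_nz] := eqVneq (head_sum v) 0.
  by right; exact: eigen_head_sum0.
left.
have blockE (b : 'I_(size ns)) : block_sum v b =
    (1 - a) * head_sum v * ((nth 0%N ns b)%:R / (l - pole (nth 0%N ns b))).
  have gap_nz : l - pole (nth 0%N ns b) != 0 by rewrite subr_eq0 gt_eqF ?pole_blk_lt.
  by apply: (mulfI gap_nz); rewrite eigen_block_sum; field.
have tailE : tail_sum v = (1 - a) * head_sum v * \sum_(m <- ns) m%:R / (l - pole m).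
  rewrite tail_sum_by_blk (big_nth 0%N) big_mkord mulr_sumr.
  by apply: eq_bigr => b _; exact: blockE.
apply: (mulIf head_nz); rewrite mul0r; move: eigen_head_sum; rewrite tailE /secular.
set S := \sum_(m <- ns) _; lra.
Qed.

End Eigenvector.

Lemma secular_root_char l : (0 < s)%N -> {in ns, forall m, pole m < l} ->
  secular l = 0 -> root (char_poly A) l.
Proof.
move=> s_gt0 l_above sec0.
pose beta b := (1 - a) * s%:R / (l - pole (nth 0%N ns b)).
pose v : row := \row_j (if (j < s)%N then 1 else beta (blk ns (j - s))).
have vL i : v 0 (lshift _ i) = 1 by rewrite mxE /= ltn_ord.
have vR k : v 0 (rshift _ k) = beta (blk ns k).
  by rewrite mxE /= ltnNge leq_addr /= addKn.
have headE : head_sum v = s%:R.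
  by rewrite /head_sum; under eq_bigr do rewrite vL; rewrite sumr_const card_ord.
have blockE b : block_sum v b = (nth 0%N ns b)%:R * beta b.
  rewrite /block_sum (eq_bigr (fun _ => beta b)) => [|k /eqP <-]; last exact: vR.
  by rewrite sum_blk_const mulr_natl.
have tailE : tail_sum v = (1 - a) * s%:R * \sum_(m <- ns) m%:R / (l - pole m).
  rewrite tail_sum_by_blk (big_nth 0%N) big_mkord mulr_sumr.
  by apply: eq_bigr => b _; rewrite blockE /beta mulrCA !mulrA.
rewrite -eigenvalue_root_char; apply/eigenvalueP; exists v; last first.
  apply/eqP => /rowP /(_ (lshift (sumn ns) (Ordinal s_gt0))); rewrite vL mxE.
  exact/eqP/oner_neq0.
apply/rowP => j; rewrite [RHS]mxE; case: (splitP j) => [i|k] jE.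
  rewrite (_ : j = lshift _ i); last exact: val_inj.
  rewrite mulmx_A_lshift headE tailE !vL; move: sec0; rewrite /secular /secular_base.
  set S := \sum_(m <- ns) _; lra.
rewrite (_ : j = rshift _ k); last exact: val_inj.
rewrite mulmx_A_rshift headE blockE !vR.
have : beta (blk ns k) * (l - pole (nth 0%N ns (blk ns k))) = (1 - a) * s%:R.
  rewrite /beta mulfVK // subr_eq0 gt_eqF // l_above // mem_nth //.
  exact: blk_lt (ltn_ord k).
rewrite /pole; lra.
Qed.

Lemma secular_lt l1 l2 : {in ns, forall m, pole m < l1} -> l1 < l2 ->
  secular l1 < secular l2.
Proof.
move=> l1_above l12; rewrite /secular.
have : \sum_(m <- ns) m%:R / (l2 - pole m) <= \sum_(m <- ns) m%:R / (l1 - pole m).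
  rewrite !big_seq; apply: ler_sum => m mns; apply: ler_wpM2l => //.
  have gap1 := l1_above m mns.
  by rewrite lef_pV2 ?posrE ?subr_gt0 ?lerD2r ?ltW //; apply: lt_trans l12.
have : 0 <= (1 - a) ^+ 2 * s%:R by rewrite mulr_ge0 ?sqr_ge0.
set S1 := \sum_(m <- ns) _; set S2 := \sum_(m <- ns) _ => K0 S21.
have := ler_wpM2l K0 S21; lra.
Qed.

Lemma secular_base_le l : {in ns, forall m, pole m < l} -> secular l = 0 ->
  secular_base <= l.
Proof.
move=> l_above; rewrite /secular.
have : 0 <= (1 - a) ^+ 2 * s%:R * \sum_(m <- ns) m%:R / (l - pole m).
  apply: mulr_ge0; first by rewrite mulr_ge0 ?sqr_ge0.
  rewrite big_seq; apply: sumr_ge0 => m mns.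
  by rewrite divr_ge0 // subr_ge0 ltW // l_above.
lra.
Qed.

Lemma lambda_max_secular r : a < 1 -> (0 < s)%N -> 0 <= r ->
  {in ns, forall m, pole m < r} -> secular r = 0 -> lambda_max A = r.
Proof.
move=> a_lt1 s_gt0 r_ge0 r_above sec0; apply: lambda_max_eq => // [|x].
  exact: secular_root_char.
rewrite -eigenvalue_root_char => /eigenvalueP [v eig_v v_nz].
rewrite leNgt; apply/negP => rx.
have x_above : {in ns, forall m, pole m < x}.
  by move=> m mns; apply: lt_trans (r_above m mns) rx.
case: (eigen_secular eig_v a_lt1 x_above v_nz) => [secx|xE].
  by have := secular_lt r_above rx; rewrite sec0 secx ltxx.
have := secular_base_le r_above sec0; rewrite /secular_base.
have : 0 < (1 - a) * s%:R by rewrite mulr_gt0 ?ltr0n // subr_gt0.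
by move: rx; rewrite xE natrD; lra.
Qed.

End Secular.

Section TwoValued.
Variables (R : realType) (s p t N : nat) (a : R).
Hypotheses (a_lt1 : a < 1) (s_gt0 : (0 < s)%N) (p_gt0 : (0 < p)%N) (pN : (p <= N)%N).
Local Notation g := (secular s (N :: nseq t p) a).
Local Notation A := (pole s a N).
Local Notation B := (pole s a p).
Local Notation base := (secular_base s (N :: nseq t p) a).
Local Notation K := ((1 - a) ^+ 2 * s%:R).

Lemma secular_two_valuedE l :
  g l = l - base - K * (N%:R / (l - A)) - K * t%:R * (p%:R / (l - B)).
Proof.
by rewrite /secular big_cons big_nseq iter_addr_0 -mulr_natl; ring.
Qed.

Let K_gt0 : 0 < K.
Proof. by rewrite mulr_gt0 ?ltr0n // exprn_gt0 // subr_gt0. Qed.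

Let KN_gt0 : 0 < K * N%:R.
Proof. by rewrite mulr_gt0 // ltr0n (leq_trans p_gt0). Qed.

Let B_le_A : B <= A.
Proof. exact: ler_pole. Qed.

Lemma secular_neg_near_pole : exists2 l, A < l & g l < 0.
Proof.
(* At [l = A + d] the pole term [K N / d] equals [D], which beats everything else. *)
have KN := KN_gt0; have BA := B_le_A.
pose D := `|A - base| + 1 + K * N%:R.
have D_gt : K * N%:R < D by have := normr_ge0 (A - base); rewrite /D; lra.
pose d := K * N%:R / D.
have d_gt0 : 0 < d by rewrite divr_gt0 //; lra.
have d_lt1 : d < 1 by rewrite ltr_pdivrMr ?mul1r //; lra.
exists (A + d); first lra.
rewrite secular_two_valuedE (_ : A + d - A = d); last ring.
have DE : K * (N%:R / d) = D.
  rewrite /d; field; apply/and4P; split; rewrite gt_eqF ?ltr0n ?subr_gt0 //; first lra.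
  exact: leq_trans p_gt0 pN.
rewrite DE.
have : 0 <= K * t%:R * (p%:R / (A + d - B)).
  apply: mulr_ge0; first by rewrite mulr_ge0 // ltW.
  by rewrite divr_ge0 // subr_ge0; lra.
have := ler_norm (A - base); rewrite /D; lra.
Qed.

Lemma secular_pos_far l0 : exists2 l, l0 <= l & 0 < g l.
Proof.
have K0 := K_gt0; have KN := KN_gt0; have BA := B_le_A.
have Ktp : 0 <= K * t%:R * p%:R by do 2 apply: mulr_ge0 => //; exact: ltW.
have := ler_norm l0; have := ler_norm A; have := normr_ge0 l0; have := normr_ge0 base.
have := normr_ge0 A => A0 base0 l00 A1 l01.
pose l := `|l0| + `|base| + `|A| + (K * N%:R + K * t%:R * p%:R) + 2.
have lA : 1 <= l - A by rewrite /l; lra.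
have lB : 1 <= l - B by lra.
exists l; first by rewrite /l; lra.
have qN : N%:R / (l - A) <= N%:R by rewrite ler_pdivrMr ?ler_peMr //; lra.
have qp : p%:R / (l - B) <= p%:R by rewrite ler_pdivrMr ?ler_peMr //; lra.
have := ler_wpM2l (ltW K0) qN; have := ler_wpM2l (mulr_ge0 (ltW K0) (ler0n _ t)) qp.
have := ler_norm base; rewrite secular_two_valuedE /l; lra.
Qed.

Lemma secular_two_valued_root : exists2 r, A < r & g r = 0.
Proof.
pose P : {poly R} := ('X - base%:P) * ('X - A%:P) * ('X - B%:P)
  - (K * N%:R)%:P * ('X - B%:P) - (K * t%:R * p%:R)%:P * ('X - A%:P).
have gaps l : A < l -> 0 < (l - A) * (l - B).
  by move=> Al; rewrite mulr_gt0 // subr_gt0 // (le_lt_trans B_le_A).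
have PE l : A < l -> P.[l] = (l - A) * (l - B) * g l.
  move=> Al; have lA : l - A != 0 by rewrite subr_eq0 gt_eqF.
  have lB : l - B != 0 by rewrite subr_eq0 gt_eqF // (le_lt_trans B_le_A).
  have -> : P.[l] = (l - base) * (l - A) * (l - B) - K * N%:R * (l - B) -
    K * t%:R * p%:R * (l - A) by rewrite /P !hornerE.
  by rewrite secular_two_valuedE; field; rewrite lA lB.
have [l0 Al0 gl0] := secular_neg_near_pole.
have [l1 l01 gl1] := secular_pos_far l0.
have Al1 : A < l1 by apply: lt_le_trans l01.
have sign : P.[l0] <= 0 <= P.[l1].
  by rewrite PE // PE // pmulr_rle0 ?pmulr_rge0 ?gaps // !ltW.
have [r /andP[l0r _] /rootP] := poly_ivt l01 sign.
have Ar : A < r by apply: lt_le_trans l0r.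
by rewrite PE // => /eqP; rewrite mulf_eq0 gt_eqF ?gaps //= => /eqP gr0; exists r.
Qed.

End TwoValued.

Section Comparison.
Variables (R : realType) (a : R) (s p m : nat) (l : seq nat).
Hypothesis ns_ge_p : all (leq p) (m :: l).
Local Notation ns := (m :: l).
Local Notation N := (sumn ns - p * size l)%N.
Local Notation ns0 := (N :: nseq (size l) p).

Lemma pole_le_top k : k \in ns -> pole s a k <= pole s a N.
Proof. by move=> /(mem_leq_top_part ns_ge_p); apply: ler_pole. Qed.

Lemma pole_extremal_le_top k : k \in ns0 -> pole s a k <= pole s a N.
Proof.
rewrite inE => /predU1P[-> //|/nseqP[-> _]]; exact/ler_pole/(leq_top_part ns_ge_p).
Qed.

Hypotheses (a_ge0 : 0 <= a) (a_lt1 : a < 1) (s_gt0 : (0 < s)%N) (p_gt0 : (0 < p)%N).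

Lemma secular_le_extremal x : pole s a N < x ->
  secular s ns0 a x <= secular s ns a x /\
  (secular s ns0 a x = secular s ns a x -> (count (ltn p) ns <= 1)%N).
Proof.
move=> Nx; set y := x + 1 - a * s%:R.
have termE k : k%:R / (x - pole s a k) = pole_term y k%:R.
  by rewrite /pole_term /y /pole; congr (_ / _); ring.
have Ny : (m + sumn l - p * size l)%:R < y by move: Nx; rewrite /pole /y; lra.
have [le_sum eq_sum] := sum_pole_term_le ns_ge_p Ny.
have secE (ns' : seq nat) : secular s ns' a x = x - secular_base s ns' a -
    (1 - a) ^+ 2 * s%:R * \sum_(k <- ns') pole_term y k%:R.
  by rewrite /secular; under eq_bigr do rewrite termE.
have K0 : 0 <= (1 - a) ^+ 2 * s%:R by rewrite mulr_ge0 ?sqr_ge0.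
rewrite !secE /secular_base (sumn_extremal ns_ge_p) big_cons big_nseq iter_addr_0 -mulr_natl.
split=> [|eq]; first by have := ler_wpM2l K0 le_sum; lra.
have K_gt0 : 0 < (1 - a) ^+ 2 * s%:R by rewrite mulr_gt0 ?ltr0n // exprn_gt0 // subr_gt0.
apply/eq_sum/eqP; rewrite -(inj_eq (mulfI (lt0r_neq0 K_gt0))); apply/eqP; lra.
Qed.

Lemma lambda_max_le_extremal r : pole s a N < r -> secular s ns0 a r = 0 ->
  let x := lambda_max (A_alpha a (join_cliques s ns)) in
  x <= r /\ (x = r -> (count (ltn p) ns <= 1)%N).
Proof.
move=> Nr sec0 x.
have r_above : {in ns0, forall k, pole s a k < r}.
  by move=> k /pole_extremal_le_top le_k; apply: le_lt_trans Nr.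
suff : x < r \/ secular s ns0 a x <= 0 /\
    (secular s ns0 a x = 0 -> (count (ltn p) ns <= 1)%N).
  case=> [xr|[sec_le eq0]]; first by split=> [|xE]; [exact: ltW | lra].
  split=> [|xE]; last by apply: eq0; rewrite xE.
  by rewrite leNgt; apply/negP => /(secular_lt r_above); rewrite sec0; lra.
have N_ge0 : 0 <= pole s a N.
  by rewrite pole_ge0 // (leq_trans p_gt0 (leq_top_part ns_ge_p)).
case: (lambda_max_0_or_root (A_alpha a (join_cliques s ns))) => [x0|].
  by left; rewrite /x x0; lra.
rewrite -/x; have [xN _|Nx] := lerP x (pole s a N); first by left; lra.
rewrite -eigenvalue_root_char => /eigenvalueP [v eig_v v_nz].
have x_above : {in ns, forall k, pole s a k < x}.
  by move=> k /pole_le_top le_k; apply: le_lt_trans Nx.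
have [le_sec eq_sec] := secular_le_extremal Nx.
case: (eigen_secular eig_v a_lt1 x_above v_nz) => [secx|xE]; last first.
  left; have := secular_base_le r_above sec0.
  rewrite /secular_base (sumn_extremal ns_ge_p) xE natrD.
  have : 0 < (1 - a) * s%:R by rewrite mulr_gt0 ?ltr0n // subr_gt0.
  lra.
by right; rewrite -secx; split=> // eq0; apply: eq_sec; rewrite eq0 secx.
Qed.

End Comparison.

Unset Implicit Arguments. Set Strict Implicit.

Theorem lemma2p6 (R : realType) (alpha : R) (s t p : nat) (ns : seq nat) :
  0 <= alpha -> alpha < 1 ->
  (1 <= s)%N -> (1 <= t)%N -> (1 <= p)%N ->
  size ns = t ->
  sorted geq ns ->
  all (fun m => p <= m)%N ns ->
  let n := (s + sumn ns)%N in
  let ns0 := ((n - s - p * (t - 1))%N :: nseq (t - 1) p) in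
  (head 0%N ns <= n - s - p * (t - 1))%N ->
  rho_alpha alpha (join_cliques s ns) <= rho_alpha alpha (join_cliques s ns0) /\
  (rho_alpha alpha (join_cliques s ns) = rho_alpha alpha (join_cliques s ns0)
     <-> ns = ns0).
Proof.
move=> a_ge0 a_lt1 s_gt0 t_gt0 p_gt0 size_ns; subst t.
case: ns t_gt0 => [//|m l] _ sorted_ns ns_ge_p n ns0 _.
set N := (m + sumn l - p * size l)%N.
have -> : ns0 = N :: nseq (size l) p by rewrite /ns0 /n subn1 /= addKn.
have pN : (p <= N)%N := leq_top_part ns_ge_p.
have [r Nr sec0] := secular_two_valued_root (size l) a_lt1 s_gt0 p_gt0 pN.
have r_ge0 : 0 <= r by apply: le_trans (ltW Nr); rewrite pole_ge0 // (leq_trans p_gt0 pN).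
have r_above := fun k (k_in : k \in N :: nseq (size l) p) =>
  le_lt_trans (pole_extremal_le_top alpha s ns_ge_p k_in) Nr.
rewrite /rho_alpha (lambda_max_secular a_lt1 s_gt0 r_ge0 r_above sec0).
have [le_r eq_r] := lambda_max_le_extremal ns_ge_p a_ge0 a_lt1 s_gt0 p_gt0 Nr sec0.
split=> //; split=> [/eq_r cnt|->]; last first.
  by rewrite (lambda_max_secular a_lt1 s_gt0 r_ge0 r_above sec0).
case/andP: ns_ge_p => _ /(sorted_count_gt_le1 sorted_ns)/(_ cnt) lE.
have mN : m = N by rewrite /N lE sumn_nseq size_nseq; lia.
by rewrite -mN {1}lE.
Qed.
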